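(* Let $R$ be a tree and let $X\subseteq V(R)$ with $|X|=n$ even. Call a partition $\{X_1,\dots,X_{n/2}\}$ of $X$ into sets of size two feasible if there are $n/2$ pairwise vertex-disjoint paths $P_1,\dots,P_{n/2}$ of $R$ such that for each $i$ the ends of $P_i$ are the two members of $X_i$. Then there is at most one feasible partition of $X$. *)

From mathcomp Require Import all_boot.
Set Implicit Arguments. Unset Strict Implicit. Unset Printing Implicit Defensive.

Section Graphs.
Variable T : finType.
Variable e : rel T.

Definition simple_graph : Prop := symmetric e /\ irreflexive e.

(* A path of the graph given by its first vertex x and remaining vertices s:
   consecutive vertices adjacent, all vertices distinct.
   Its ends are x and (last x s); its vertex set is x :: s. *)
Definition gpath (x : T) (s : seq T) : bool := path e x s && uniq (x :: s).

(* no cycle: no path with at least 3 vertices whose ends are adjacent *)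
Definition acyclic : Prop :=
  forall (x : T) (s : seq T), 2 <= size s -> gpath x s -> ~~ e (last x s) x.

Definition connected : Prop := forall x y : T, connect e x y.

Definition is_tree : Prop := simple_graph /\ connected /\ acyclic.

Definition pair_partition (X : {set T}) (P : {set {set T}}) : Prop :=
  partition P X /\ (forall B, B \in P -> #|B| = 2).

Definition feasible (P : {set {set T}}) : Prop :=
  exists f : {set T} -> T * seq T,
    (forall B, B \in P -> gpath (f B).1 (f B).2 /\
                          [set (f B).1; last (f B).1 (f B).2] = B) /\
    (forall B1 B2, B1 \in P -> B2 \in P -> B1 != B2 ->
       [disjoint ((f B1).1 :: (f B1).2) & ((f B2).1 :: (f B2).2)]).
End Graphs.

From mathcomp Require Import all_boot.
Set Implicit Arguments. Unset Strict Implicit. Unset Printing Implicit Defensive.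

(* For an edge ab of the forest let S_ab be the component of a once ab is
   deleted.  The path of a block of a feasible pairing has its two ends on
   different sides of ab exactly when it uses ab, and by disjointness at most
   one path uses ab; counting X inside S_ab block by block, ab is used iff
   |X :&: S_ab| is odd.  So the used edges depend on X only.  The ends of a
   block are joined by used edges, and used edges never leave the vertex set of
   a path; as a path meets X only in its ends, the blocks are the pairs of
   vertices of X joined by used edges, for every feasible pairing. *)

Lemma path_of_splits (T : Type) (r : rel T) x s :
  (forall s1 b s2, s = s1 ++ b :: s2 -> r (last x s1) b) -> path r x s.
Proof.
elim: s x => [//|y s IH] x /= rs; rewrite (rs [::] y s) //=.
by apply: IH => s1 b s2 Es; apply: (rs (y :: s1) b s2); rewrite Es.
Qed.

Lemma odd_card_pair_partition (T : finType) (X S : {set T}) (R : {set {set T}}) :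
  partition R X -> (forall B, B \in R -> #|B| = 2) ->
  {in R &, forall B1 B2, #|B1 :&: S| = 1 -> #|B2 :&: S| = 1 -> B1 = B2} ->
  odd #|X :&: S| = [exists B in R, #|B :&: S| == 1].
Proof.
move=> RX R2 R1.
have cardIS A : #|A :&: S| = \sum_(x in A | x \in S) 1.
  by rewrite sum1dep_card; apply: eq_card => x; rewrite !inE.
have even_other B : B \in R -> #|B :&: S| != 1 -> ~~ odd #|B :&: S|.
  move=> BR; have : #|B :&: S| <= 2 by rewrite -(R2 B BR) subset_leq_card ?subsetIl.
  by case: #|B :&: S| => [|[|[|]]].
rewrite cardIS (set_partition_big_cond R RX) /=.
under eq_bigr => B _ do rewrite -cardIS.
case: existsP => [[B0 /andP[B0R /eqP B0S]] | none].
  rewrite (bigD1 B0) //= B0S oddD /= -dvdn2 dvdn_sum // => B /andP[BR BB0].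
  by rewrite dvdn2 even_other //; apply: contra_neq BB0 => BS; apply: R1.
apply/negbTE; rewrite -dvdn2 dvdn_sum // => B BR; rewrite dvdn2 even_other //.
by apply/eqP => BS; apply: none; exists B; rewrite BR BS.
Qed.

Lemma card_set2I (T : finType) (S : {set T}) h l : h != l ->
  #|[set h; l] :&: S| = (h \in S) + (l \in S).
Proof.
move=> hl; transitivity (size [seq w <- [:: h; l] | w \in S]); last first.
  by rewrite size_filter /= addn0.
have /card_uniqP <- : uniq [seq w <- [:: h; l] | w \in S].
  by rewrite filter_uniq //= inE hl.
by apply: eq_card => w; rewrite mem_filter !inE andbC.
Qed.

Section Forest.
Variables (T : finType) (e : rel T).
Hypotheses (e_sym : symmetric e) (e_irr : irreflexive e) (e_acyclic : acyclic e).

(* As e is irreflexive, this removes exactly the pairs (a, b) and (b, a). *)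
Definition del_edge (a b : T) : rel T :=
  fun c d => e c d && ~~ ((c \in [:: a; b]) && (d \in [:: a; b])).

Lemma del_edge_sym a b : symmetric (del_edge a b).
Proof. by move=> c d; rewrite /del_edge e_sym [(c \in _) && _]andbC. Qed.

Definition side (a b : T) : {set T} := [set w | connect (del_edge a b) a w].

Lemma del_edge_side a b c d :
  del_edge a b c d -> (c \in side a b) = (d \in side a b).
Proof.
move=> cd; rewrite !inE.
apply/idP/idP => ac; apply: connect_trans ac (connect1 _) => //.
by rewrite del_edge_sym.
Qed.

Lemma path_del_edge a b x s :
  path e x s -> (a \notin x :: s) || (b \notin x :: s) -> path (del_edge a b) x s.
Proof.
move=> exs ab; apply: (sub_in_path (P := mem (x :: s))) exs; last exact/allP.
move=> c d cs ds ecd; rewrite /del_edge ecd !inE /=.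
apply/negP => /andP[/orP[]/eqP c_ab /orP[]/eqP d_ab];
  by subst; rewrite ?e_irr // in ecd; case/orP: ab => /negP[].
Qed.

Lemma notin_side a b : e a b -> b \notin side a b.
Proof.
move=> eab; rewrite inE; apply/negP => /connectP[p ab_p b_last].
case: (shortenP ab_p) b_last => p' ab_p' uniq_p' _ b_last.
have e_p' : path e a p' by apply: sub_path ab_p' => c d /andP[].
case: p' ab_p' uniq_p' b_last e_p' => [|y [|z p'']] ab_p' uniq_p' b_last e_p'.
- by rewrite b_last e_irr in eab.
- by move: ab_p'; rewrite /= /del_edge b_last !inE !eqxx orbT andbF.
- have := e_acyclic (x := a) (s := [:: y, z & p'']) isT.
  by rewrite /gpath e_p' uniq_p' -b_last e_sym eab => /(_ isT).
Qed.

Lemma path_cross_side a b x s : path e x s ->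
  (x \in side a b) != (last x s \in side a b) -> (a \in x :: s) && (b \in x :: s).
Proof.
elim: s x => [|y s IH] x /=; first by rewrite eqxx.
case/andP=> exy eys; have [del_xy|] := boolP (del_edge a b x y).
  rewrite (del_edge_side del_xy) => /(IH _ eys).
  by case/andP=> ay b_y; apply/andP; split; apply: mem_behead.
rewrite /del_edge exy negbK !inE => /andP[xab yab] _.
have xy : x != y by apply: contraTneq exy => ->; rewrite e_irr.
by case/orP: xab xy => /eqP-> ; case/orP: yab => /eqP->; rewrite ?eqxx ?orbT.
Qed.

Lemma split_path_sides x s1 b s2 : gpath e x (s1 ++ b :: s2) ->
  (x \in side (last x s1) b) && (last b s2 \notin side (last x s1) b).
Proof.
set a := last x s1; rewrite /gpath cat_path -cat_cons cat_uniq.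
case/andP=> /andP[e_s1 /andP[eab e_s2]] /and3P[_ /hasPn disj _].
have b_s1 : b \notin x :: s1 by apply: disj; rewrite mem_head.
have a_s2 : a \notin b :: s2.
  by apply: contraL (mem_last x s1) => a_s2; apply: disj.
have xa : connect (del_edge a b) a x.
  rewrite (sym_connect_sym (del_edge_sym a b)).
  by apply/connectP; exists s1; rewrite // path_del_edge // b_s1 orbT.
rewrite inE xa /=; apply: contra (notin_side eab); rewrite !inE => a_last.
apply: connect_trans a_last _; rewrite (sym_connect_sym (del_edge_sym a b)).
by apply/connectP; exists s2; rewrite // path_del_edge // a_s2.
Qed.

(* The edges used by the paths of any feasible pairing of X. *)
Definition linkage_edge (X : {set T}) : rel T :=
  fun a b => e a b && odd #|X :&: side a b|.

Section Linkage.
Variables (X : {set T}) (R : {set {set T}}) (f : {set T} -> T * seq T).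
Hypotheses (R_partition : partition R X) (R_pairs : forall B, B \in R -> #|B| = 2).
Hypothesis f_path : forall B, B \in R ->
  gpath e (f B).1 (f B).2 /\ [set (f B).1; last (f B).1 (f B).2] = B.
Hypothesis f_disjoint : forall B1 B2, B1 \in R -> B2 \in R -> B1 != B2 ->
  [disjoint ((f B1).1 :: (f B1).2) & ((f B2).1 :: (f B2).2)].

Local Notation verts B := ((f B).1 :: (f B).2).
Local Notation src B := (f B).1.
Local Notation dst B := (last (f B).1 (f B).2).

Lemma common_vert_eq B1 B2 w : B1 \in R -> B2 \in R ->
  w \in verts B1 -> w \in verts B2 -> B1 = B2.
Proof.
move=> B1R B2R w1 w2; apply/eqP; apply: contraT => B12.
by have := disjointFr (f_disjoint B1R B2R B12) w1; rewrite w2.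
Qed.

Lemma block_ends B : B \in R -> B = [set src B; dst B].
Proof. by case/f_path. Qed.

Lemma src_neq_dst B : B \in R -> src B != dst B.
Proof.
by move=> BR; have := R_pairs BR; rewrite {1}(block_ends BR) cards2; case: (_ != _).
Qed.

Lemma block_sub_verts B : B \in R -> {subset B <= verts B}.
Proof.
move=> BR w; rewrite {1}(block_ends BR) in_set2.
by case/orP=> /eqP->; [exact: mem_head | exact: mem_last].
Qed.

Lemma card_blockI B S : B \in R -> #|B :&: S| = (src B \in S) + (dst B \in S).
Proof. by move=> BR; rewrite {1}(block_ends BR) card_set2I ?src_neq_dst. Qed.

Lemma crossing_block_verts a b B : B \in R -> #|B :&: side a b| = 1 ->
  (a \in verts B) && (b \in verts B).
Proof.
move=> BR; have [/andP[e_path _] _] := f_path BR.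
rewrite card_blockI // => cross; apply: (path_cross_side e_path).
by move: cross; case: (_ \in _); case: (_ \in _).
Qed.

Lemma odd_side_crossing a b :
  odd #|X :&: side a b| = [exists B in R, #|B :&: side a b| == 1].
Proof.
apply: odd_card_pair_partition => // B1 B2 B1R B2R.
move=> /(crossing_block_verts B1R) /andP[a1 _] /(crossing_block_verts B2R) /andP[a2 _].
exact: common_vert_eq a1 a2.
Qed.

Lemma linkage_edge_split B s1 b s2 : B \in R -> (f B).2 = s1 ++ b :: s2 ->
  linkage_edge X (last (src B) s1) b.
Proof.
move=> BR Es; have [gp _] := f_path BR; rewrite Es in gp.
have eab : e (last (src B) s1) b by case/andP: gp; rewrite cat_path => /and3P[].
rewrite /linkage_edge eab odd_side_crossing; apply/existsP; exists B.
rewrite BR card_blockI // Es last_cat.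
by case/andP: (split_path_sides gp) => -> /negbTE->.
Qed.

Lemma connect_linkage_ends B : B \in R -> connect (linkage_edge X) (src B) (dst B).
Proof.
move=> BR; apply/connectP; exists (f B).2 => //.
by apply: path_of_splits => s1 b s2; apply: linkage_edge_split.
Qed.

Lemma linkage_edge_closed B : B \in R -> closed (linkage_edge X) (verts B).
Proof.
move=> BR c d /andP[_]; rewrite odd_side_crossing.
case/existsP=> B' /andP[B'R /eqP cross].
have /andP[c' d'] := crossing_block_verts B'R cross.
apply/idP/idP => [c_B | d_B]; first by rewrite (common_vert_eq BR B'R c_B c').
by rewrite (common_vert_eq BR B'R d_B d').
Qed.

Lemma verts_X_sub_block B w : B \in R -> w \in X -> w \in verts B -> w \in B.
Proof.
move=> BR; rewrite -(cover_partition R_partition) => /bigcupP[B' B'R wB'] w_B.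
by rewrite (common_vert_eq BR B'R w_B (block_sub_verts B'R wB')).
Qed.

End Linkage.
End Forest.

Lemma feasible_pair_partition_subset (T : finType) (e : rel T) (X : {set T})
    (P Q : {set {set T}}) :
  simple_graph e -> acyclic e ->
  pair_partition X P -> feasible e P -> pair_partition X Q -> feasible e Q ->
  P \subset Q.
Proof.
move=> [e_sym e_irr] e_acyclic [PX P2] [f [fP f_disj]] [QX Q2] [g [gQ g_disj]].
apply/subsetP => B BP; set h := (f B).1; set l := last h (f B).2.
have hl : connect (linkage_edge e X) h l.
  exact: (connect_linkage_ends e_sym e_irr e_acyclic PX P2 fP f_disj BP).
have [hX lX] : h \in X /\ l \in X.
  rewrite -(cover_partition PX); split; apply/bigcupP; exists B => //;
    by rewrite (block_ends fP BP) !inE eqxx ?orbT.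
have [C CQ hC] : exists2 C, C \in Q & h \in C.
  by move: hX; rewrite -(cover_partition QX) => /bigcupP[C]; exists C.
have lC : l \in C.
  apply: (verts_X_sub_block QX gQ g_disj CQ lX).
  rewrite -(closed_connect (linkage_edge_closed e_sym e_irr QX Q2 gQ g_disj CQ) hl).
  exact: (block_sub_verts gQ CQ hC).
suff -> : B = C by [].
apply/eqP; rewrite eqEcard {1}(block_ends fP BP) subUset !sub1set hC lC.
by rewrite Q2 // P2.
Qed.

Theorem mainTheorem3 (T : finType) (e : rel T) (X : {set T})
    (P Q : {set {set T}}) :
  is_tree e -> ~~ odd #|X| ->
  pair_partition X P -> feasible e P ->
  pair_partition X Q -> feasible e Q ->
  P = Q.
Proof.
move=> [simple [_ e_acyclic]] _ pP fP pQ fQ; apply/eqP; rewrite eqEsubset.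
by rewrite (feasible_pair_partition_subset simple e_acyclic pP fP pQ fQ)
  (feasible_pair_partition_subset simple e_acyclic pQ fQ pP fP).
Qed.
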